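(* For any hypergraph $H$, $\pi(S(H))\le\pi(H)$.
   Context: A hypergraph $H=(V,E)$ has finite vertex set $V$ and edge set $E\subseteq 2^V$; $R(H)=\{|F|:F\in E\}$. $H_1\subseteq H_2$ means there is an injective $f\colon V(H_1)\to V(H_2)$ with $f(F)\in E(H_2)$ for all $F\in E(H_1)$. For $G$ on $n$ vertices, $h_n(G)=\sum_{F\in E(G)}1/\binom{n}{|F|}$; $\pi_n(H)=\max\{h_n(G): G\text{ on } n \text{ vertices}, R(G)\subseteq R(H), H\not\subseteq G\}$ and $\pi(H)=\lim_n\pi_n(H)$. The suspension $S(H)$ has vertex set $V(H)\cup\{\ast\}$ for a new vertex $\ast$ and edge set $\{F\cup\{\ast\}: F\in E(H)\}$. *)

From HB Require Import structures.
From mathcomp Require Import all_boot all_order all_algebra.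
From mathcomp Require Import all_classical all_reals all_analysis.
Set Implicit Arguments. Unset Strict Implicit. Unset Printing Implicit Defensive.
Import Order.TTheory GRing.Theory Num.Theory.
Import numFieldNormedType.Exports.
Local Open Scope ring_scope.

Definition sizes_sub (V W : finType) (EG : {set {set V}}) (EH : {set {set W}}) : bool :=
  [forall F in EG, [exists F' in EH, #|F| == #|F'|]].

Definition hcontained (V1 V2 : finType) (E1 : {set {set V1}}) (E2 : {set {set V2}}) : bool :=
  [exists f : {ffun V1 -> V2}, injectiveb f && [forall F in E1, (f @: F) \in E2]].

Definition lubell (R : realType) (n : nat) (EG : {set {set 'I_n}}) : R :=
  \sum_(F in EG) (('C(n, #|F|))%:R)^-1.

(* pi_n(H): maximum of h_n(G) over all G on n vertices with R(G) \subseteq R(H)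
   and H not contained in G (0 if there is no such G; h_n >= 0). *)
Definition pi_n (R : realType) (V : finType) (E : {set {set V}}) (n : nat) : R :=
  \big[Num.max/0]_(EG : {set {set 'I_n}} | sizes_sub EG E && ~~ hcontained E EG)
     lubell R EG.

Definition turan_density (R : realType) (V : finType) (E : {set {set V}}) : R :=
  limn (pi_n R E : R^nat).

(* Suspension S(H): vertex set option V (None is the new vertex "star"),
   edges F \cup {*} for F in E(H). *)
Definition susp (V : finType) (E : {set {set V}}) : {set {set option V}} :=
  [set (Some @: F) :|: [set None] | F : {set V} in E].

(* For G on n+1 vertices with edge sizes in R(S(H)) and no copy of S(H), the
   link of any vertex v (the sets F with F + v in G) is a hypergraph on n
   vertices with edge sizes in R(H) and no copy of H, so its Lubell value is at
   most pi_n(H).  Double counting shows that the Lubell values of the n+1 links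
   average exactly to h_{n+1}(G); hence pi_{n+1}(S(H)) <= pi_n(H).  The same
   averaging over the n+1 vertex-deleted subgraphs shows that pi_n(H) is
   nonincreasing once n >= |V(H)|, so both densities are genuine limits and the
   inequality passes to the limit. *)
From mathcomp Require Import all_boot all_order all_algebra.
From mathcomp Require Import all_classical all_reals all_analysis.
Import Order.TTheory GRing.Theory Num.Theory.
Import numFieldNormedType.Exports.
Local Open Scope ring_scope.
Set Implicit Arguments. Unset Strict Implicit.

Section DoubleCounting.
Variable R : nmodType.

Lemma big_preimset_inj (I J : finType) (phi : I -> J) (A : {set J}) (P : pred J)
    (g : J -> R) :
  injective phi -> (forall y, P y -> exists x, y = phi x) -> (forall x, P (phi x)) ->
  \sum_(x in [set x | phi x \in A]) g (phi x) = \sum_(y in A | P y) g y.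
Proof.
move=> phi_inj P_im P_phi.
rewrite -(big_imset g (in2W phi_inj)); apply: eq_bigl => y /=; apply/idP/idP.
  by case/imsetP => x; rewrite inE => Ax ->; rewrite Ax P_phi.
by case/andP=> Ay /P_im [x yE]; rewrite yE mem_imset // inE -yE.
Qed.

Lemma sum_count_exchange (I J : finType) (P : I -> pred J) (A : {set J})
    (g : J -> R) :
  \sum_i \sum_(y in A | P i y) g y = \sum_(y in A) g y *+ #|[set i | P i y]|.
Proof.
under eq_bigr do rewrite big_mkcondr /=.
rewrite exchange_big /=; apply: eq_bigr => y _.
by rewrite -big_mkcond /= -sumr_const; apply: eq_bigl => i; rewrite inE.
Qed.

End DoubleCounting.

Section BinomialWeights.
Variable R : numFieldType.

Lemma natr_bin_neq0 n k : (k <= n)%N -> ('C(n, k)%:R : R) != 0.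
Proof. by move=> kn; rewrite pnatr_eq0 -lt0n bin_gt0. Qed.

Lemma invr_bin_link n k : (k <= n)%N ->
  ('C(n, k)%:R : R)^-1 *+ k.+1 = n.+1%:R * ('C(n.+1, k.+1)%:R)^-1.
Proof.
move=> kn; rewrite -[_ *+ _.+1]mulr_natr mulrC; apply/eqP.
rewrite eqr_div ?natr_bin_neq0 //; apply/eqP.
by rewrite -!natrM mulnC mul_bin_diag mulnC.
Qed.

Lemma invr_bin_delete n k : (k <= n)%N ->
  ('C(n, k)%:R : R)^-1 *+ (n.+1 - k) = n.+1%:R * ('C(n.+1, k)%:R)^-1.
Proof.
move=> kn; rewrite -[_ *+ (_ - _)]mulr_natr mulrC; apply/eqP.
rewrite eqr_div ?natr_bin_neq0 //; last exact: ltnW.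
by apply/eqP; rewrite -!natrM -mul_bin_down.
Qed.

End BinomialWeights.

Lemma le_of_sum_eq_card_mul (R : numDomainType) (I : finType) (f : I -> R) (x c : R) :
  (0 < #|I|)%N -> \sum_i f i = #|I|%:R * x -> (forall i, f i <= c) -> x <= c.
Proof.
move=> I_gt0 sum_f f_le; rewrite -(@ler_pM2l _ #|I|%:R) ?ltr0n // -sum_f.
by rewrite mulr_natl -sumr_const; apply: ler_sum.
Qed.

Section LinkAndDeletion.
Variable n : nat.

Definition link (v : 'I_n.+1) (G : {set {set 'I_n.+1}}) : {set {set 'I_n}} :=
  [set F : {set 'I_n} | v |: (lift v @: F) \in G].

Definition delete_vertex (v : 'I_n.+1) (G : {set {set 'I_n.+1}}) : {set {set 'I_n}} :=
  [set F : {set 'I_n} | lift v @: F \in G].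

Lemma notin_imset_lift (v : 'I_n.+1) (F : {set 'I_n}) : v \notin lift v @: F.
Proof. by apply/imsetP => -[j _ vE]; move: (neq_lift v j); rewrite -vE eqxx. Qed.

Lemma imset_lift_preimset (v : 'I_n.+1) (F' : {set 'I_n.+1}) :
  v \notin F' -> lift v @: [set i | lift v i \in F'] = F'.
Proof.
move=> vF'; apply/setP => u; case: (unliftP v u) => [j ->|->].
  by rewrite mem_imset ?inE //; apply: lift_inj.
by rewrite (negbTE vF') (negbTE (notin_imset_lift _ _)).
Qed.

Lemma card_imset_lift (v : 'I_n.+1) (F : {set 'I_n}) : #|lift v @: F| = #|F|.
Proof. exact/card_imset/lift_inj. Qed.

Lemma card_link_edge (v : 'I_n.+1) (F : {set 'I_n}) : #|v |: (lift v @: F)| = #|F|.+1.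
Proof. by rewrite cardsU1 notin_imset_lift card_imset_lift. Qed.

Lemma sum_lubell_link (R : realType) (G : {set {set 'I_n.+1}}) :
  (forall F', F' \in G -> 0 < #|F'|)%N ->
  \sum_v lubell R (link v G) = n.+1%:R * lubell R G.
Proof.
move=> G_gt0; rewrite /lubell.
have link_sum v : \sum_(F in link v G) ('C(n, #|F|)%:R : R)^-1 =
    \sum_(F' in G | v \in F') ('C(n, #|F'|.-1)%:R)^-1.
  rewrite -(@big_preimset_inj _ _ _ (fun F : {set 'I_n} => v |: (lift v @: F)) _
    (fun F' => v \in F')).
  - by apply: eq_bigr => F _; rewrite card_link_edge.
  - move=> F1 F2 eqF; apply: (imset_inj (@lift_inj _ v)).
    by rewrite -(finset.setU1K (notin_imset_lift v F1)) eqF finset.setU1K ?notin_imset_lift.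
  - move=> F' vF'; exists [set i | lift v i \in F' :\ v].
    by rewrite imset_lift_preimset ?setD11 // finset.setD1K.
  - by move=> F; rewrite setU11.
under eq_bigr do rewrite link_sum.
rewrite sum_count_exchange mulr_sumr; apply: eq_bigr => F' F'G.
have -> : #|[set v | v \in F']| = #|F'| by apply: eq_card => u; rewrite inE.
have := G_gt0 F' F'G; have := max_card F'; rewrite card_ord.
by case: #|F'| => // k kn _; apply: invr_bin_link.
Qed.

Lemma sum_lubell_delete_vertex (R : realType) (G : {set {set 'I_n.+1}}) :
  (forall F', F' \in G -> #|F'| <= n)%N ->
  \sum_v lubell R (delete_vertex v G) = n.+1%:R * lubell R G.
Proof.
move=> G_le; rewrite /lubell.
have delete_sum v : \sum_(F in delete_vertex v G) ('C(n, #|F|)%:R : R)^-1 =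
    \sum_(F' in G | v \notin F') ('C(n, #|F'|)%:R)^-1.
  rewrite -(@big_preimset_inj _ _ _ (fun F : {set 'I_n} => lift v @: F) _
    (fun F' => v \notin F')).
  - by apply: eq_bigr => F _; rewrite card_imset_lift.
  - exact: (imset_inj (@lift_inj _ v)).
  - by move=> F' vF'; exists [set i | lift v i \in F']; rewrite imset_lift_preimset.
  - exact: notin_imset_lift.
under eq_bigr do rewrite delete_sum.
rewrite sum_count_exchange mulr_sumr; apply: eq_bigr => F' F'G.
have -> : #|[set v | v \notin F']| = (n.+1 - #|F'|)%N.
  transitivity #|~: F'|; first by apply: eq_card => u; rewrite !inE.
  by rewrite cardsCs finset.setCK card_ord.
exact/invr_bin_delete/G_le.
Qed.

End LinkAndDeletion.

Section HereditaryProperties.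
Variables (V : finType) (E : {set {set V}}) (n : nat).
Implicit Type G : {set {set 'I_n.+1}}.

Lemma card_susp_edge (F : {set V}) : #|(Some @: F) :|: [set None]| = #|F|.+1.
Proof.
rewrite finset.setUC cardsU1 card_imset; last exact: Some_inj.
by have -> : None \notin Some @: F by apply/imsetP => -[].
Qed.

Lemma sizes_sub_susp_gt0 (T : finType) (G : {set {set T}}) (F' : {set T}) :
  sizes_sub G (susp E) -> F' \in G -> (0 < #|F'|)%N.
Proof.
move=> /forall_inP sizesG /sizesG /exists_inP [_ /imsetP [F _ ->]].
by rewrite card_susp_edge => /eqP ->.
Qed.

Lemma sizes_sub_le (T : finType) (G : {set {set T}}) (F' : {set T}) :
  sizes_sub G E -> F' \in G -> (#|F'| <= #|V|)%N.
Proof.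
by move=> /forall_inP sizesG /sizesG /exists_inP [F _ /eqP ->]; apply: max_card.
Qed.

Lemma sizes_sub_link v G : sizes_sub G (susp E) -> sizes_sub (link v G) E.
Proof.
move=> /forall_inP sizesG; apply/forall_inP => F; rewrite inE.
move=> /sizesG /exists_inP [_ /imsetP [F0 F0E ->]].
rewrite card_link_edge card_susp_edge eqSS => cardF.
by apply/exists_inP; exists F0.
Qed.

Lemma sizes_sub_delete_vertex v G :
  sizes_sub G E -> sizes_sub (delete_vertex v G) E.
Proof.
move=> /forall_inP sizesG; apply/forall_inP => F; rewrite inE.
move=> /sizesG /exists_inP [F0 F0E]; rewrite card_imset_lift => cardF.
by apply/exists_inP; exists F0.
Qed.

Lemma hcontained_link v G : hcontained E (link v G) -> hcontained (susp E) G.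
Proof.
case/existsP => f /andP [/injectiveP f_inj /forall_inP fE].
apply/existsP; exists [ffun o => if o is Some x then lift v (f x) else v].
apply/andP; split.
  apply/injectiveP => -[x|] [y|]; rewrite !ffunE //.
  - by move/lift_inj/f_inj => ->.
  - by move/eqP; rewrite eq_sym (negbTE (neq_lift v (f x))).
  - by move/eqP; rewrite (negbTE (neq_lift v (f y))).
apply/forall_inP => _ /imsetP [F FE ->].
move: (fE F FE); rewrite inE imsetU imset_set1 ffunE finset.setUC -!imset_comp.
by congr (_ :|: _ \in G); apply: eq_imset => x; rewrite /= ffunE.
Qed.

Lemma hcontained_delete_vertex v G :
  hcontained E (delete_vertex v G) -> hcontained E G.
Proof.
case/existsP => f /andP [/injectiveP f_inj /forall_inP fE].
apply/existsP; exists [ffun x => lift v (f x)]; apply/andP; split.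
  by apply/injectiveP => x y; rewrite !ffunE => /lift_inj/f_inj.
apply/forall_inP => F FE; move: (fE F FE); rewrite inE -imset_comp.
by congr (_ \in G); apply: eq_imset => x; rewrite /= ffunE.
Qed.

End HereditaryProperties.

Section TuranNumbers.
Variables (R : realType) (V : finType) (E : {set {set V}}).

Lemma pi_n_ge0 n : 0 <= pi_n R E n.
Proof.
apply: (big_ind (fun x => 0 <= x)) => // [x y x0 _|G _]; first by rewrite le_max x0.
by apply: sumr_ge0 => F _; rewrite invr_ge0 ler0n.
Qed.

Lemma pi_n_le n (c : R) : 0 <= c ->
  (forall G : {set {set 'I_n}}, sizes_sub G E -> ~~ hcontained E G -> lubell R G <= c) ->
  pi_n R E n <= c.
Proof.
move=> c0 lubell_le; apply: (big_ind (fun x => x <= c)) => //.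
  by move=> x y xc yc; rewrite ge_max xc yc.
by move=> G /andP []; apply: lubell_le.
Qed.

Lemma lubell_le_pi_n n (G : {set {set 'I_n}}) :
  sizes_sub G E -> ~~ hcontained E G -> lubell R G <= pi_n R E n.
Proof.
by move=> sizesG freeG; rewrite /pi_n (bigD1 G) ?sizesG //= le_max lexx.
Qed.

End TuranNumbers.

Section TuranDensity.
Variables (R : realType) (V : finType) (E : {set {set V}}).

Lemma pi_n_susp_le n : pi_n R (susp E) n.+1 <= pi_n R E n.
Proof.
apply: (pi_n_le (n := n.+1) (pi_n_ge0 R E n)) => G sizesG freeG.
apply: (le_of_sum_eq_card_mul (f := fun v => lubell R (link v G))).
- by rewrite card_ord.
- by rewrite card_ord sum_lubell_link // => F'; apply: sizes_sub_susp_gt0 sizesG.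
- move=> v; apply: lubell_le_pi_n; first exact: sizes_sub_link.
  by apply: contra freeG; apply: hcontained_link.
Qed.

Lemma pi_n_succ_le n : (#|V| <= n)%N -> pi_n R E n.+1 <= pi_n R E n.
Proof.
move=> Vn; apply: (pi_n_le (n := n.+1) (pi_n_ge0 R E n)) => G sizesG freeG.
apply: (le_of_sum_eq_card_mul (f := fun v => lubell R (delete_vertex v G))).
- by rewrite card_ord.
- rewrite card_ord sum_lubell_delete_vertex // => F' F'G.
  exact: leq_trans (sizes_sub_le sizesG F'G) Vn.
- move=> v; apply: lubell_le_pi_n; first exact: sizes_sub_delete_vertex.
  by apply: contra freeG; apply: hcontained_delete_vertex.
Qed.

Lemma cvgn_pi_n : cvgn (pi_n R E : R^nat).
Proof.
have : cvgn ([sequence pi_n R E (k + #|V|)]_k : R^nat).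
  apply: nonincreasing_is_cvgn; last by exists 0 => _ [k _ <-]; apply: pi_n_ge0.
  by apply/nonincreasing_seqP => k; rewrite /= addSn pi_n_succ_le ?leq_addl.
by case/cvg_ex => l pi_l; apply/cvg_ex; exists l; rewrite -(cvg_shiftn #|V|).
Qed.

End TuranDensity.

Theorem mainTheorem17 (R : realType) (V : finType) (E : {set {set V}}) :
  turan_density R (susp E) <= turan_density R E.
Proof.
rewrite /turan_density.
apply: (ler_cvg_to (a := \oo%classic) (f := [sequence pi_n R (susp E) k.+1]_k)
  (g := pi_n R E : R^nat)).
- by rewrite cvg_shiftS; apply: cvgn_pi_n.
- exact: cvgn_pi_n.
- by near=> k; apply: pi_n_susp_le.
Unshelve. all: end_near.
Qed.
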